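(* (a) Let $\{U_\alpha\}$ ($U_\alpha=gE_\alpha g^{-1}$, $g\in G_{<0}$) be a solution of the $(\mathrm{sl}_n(\mathbb{C}),\mathfrak{t})$-hierarchy and set $A_{m\alpha}:=\pi_{\geqslant0}(U_\alpha z^m)-U_\alpha z^m$ for $m\ge0$. Then for all $m_1,m_2\ge0$ and all $\alpha_1,\alpha_2$: $$\partial_{m_1\alpha_1}(A_{m_2\alpha_2})-\partial_{m_2\alpha_2}(A_{m_1\alpha_1})-[A_{m_1\alpha_1},A_{m_2\alpha_2}]=0.$$ (b) Let $\{V_\beta\}$ ($V_\beta=KE_\beta zK^{-1}$, $K\in G_{\leqslant0}$) be a solution of the strict $(\mathrm{sl}_n(\mathbb{C}),\mathfrak{t})$-hierarchy and set $D_{m\beta}:=\pi_{>0}(V_\beta z^{m-1})-V_\beta z^{m-1}$ for $m\ge1$. Then for all $m_1,m_2\ge1$ and all $\beta_1,\beta_2$: $$\partial_{m_1\beta_1}(D_{m_2\beta_2})-\partial_{m_2\beta_2}(D_{m_1\beta_1})-[D_{m_1\beta_1},D_{m_2\beta_2}]=0.$$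
   Context: $R$ is a commutative $\mathbb{C}$-algebra; $\mathrm{gl}_n(R)[z,z^{-1})$ is the algebra of formal series $\sum_{i=-\infty}^{N}X_iz^i$, $X_i\in\mathrm{gl}_n(R)$, bracket $[X,Y]=\sum[X_i,Y_j]z^{i+j}$; $\pi_{\geqslant0}$ (resp. $\pi_{>0}$) keeps the terms with $i\ge0$ (resp. $i\ge1$). $\mathfrak{t}\subset\mathrm{sl}_n(\mathbb{C})$ is commutative of maximal dimension $r$ with basis $E_1,\dots,E_r$. $G_{<0}=\{\mathrm{Id}+\sum_{i\ge1}Y_iz^{-i}\}$, $G_{\leqslant0}=\{\sum_{j\ge0}K_jz^{-j}\mid K_0\text{ invertible}\}$ (coefficients in $\mathrm{gl}_n(R)$). $R$ carries commuting $\mathbb{C}$-linear derivations $\partial_{m\alpha}$ ($m\ge0$ in (a), $m\ge1$ in (b), $1\le\alpha\le r$), acting coefficientwise. A solution of the $(\mathrm{sl}_n(\mathbb{C}),\mathfrak{t})$-hierarchy means $\partial_{m\alpha_1}(U_{\alpha_2})=[\pi_{\geqslant0}(U_{\alpha_1}z^m),U_{\alpha_2}]$ for all $m\ge0$, $\alpha_1,\alpha_2$; a solution of the strict hierarchy means $\partial_{m\beta_1}(V_{\beta_2})=[\pi_{>0}(V_{\beta_1}z^{m-1}),V_{\beta_2}]$ for all $m\ge1$, $\beta_1,\beta_2$. *)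

From HB Require Import structures.
From mathcomp Require Import all_boot all_order all_algebra.
Set Implicit Arguments. Unset Strict Implicit. Unset Printing Implicit Defensive.
Import Order.TTheory GRing.Theory Num.Theory.
Local Open Scope ring_scope.

(* Formal series  sum_{i=-oo}^{N} X_i z^i  with coefficients in 'M[R]_n = gl_n(R). *)
Section LSeries.
Variables (R : comNzRingType) (n : nat).

Record lseries := LSeries {
  lsN : int;
  lsc : int -> 'M[R]_n;
  lsP : forall k, lsN < k -> lsc k = 0 }.

Definition ls_eq (X Y : lseries) := forall k, lsc X k = lsc Y k.

Definition ls0 : lseries := @LSeries 0 (fun _ => 0) (fun _ _ => erefl).

Lemma ls_cst_P (M : 'M[R]_n) k :
  (0 : int) < k -> (if k == 0 then M else 0) = 0.
Proof. by move=> hk; rewrite gt_eqF. Qed.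
Definition ls_cst (M : 'M[R]_n) : lseries := @LSeries 0 _ (@ls_cst_P M).

Lemma ls_sub_P (X Y : lseries) k : Order.max (lsN X) (lsN Y) < k ->
  lsc X k - lsc Y k = 0.
Proof. by rewrite gt_max => /andP[hX hY]; rewrite !lsP // subr0. Qed.
Definition ls_sub (X Y : lseries) : lseries :=
  @LSeries (Order.max (lsN X) (lsN Y)) _ (@ls_sub_P X Y).

Lemma ls_shift_P (X : lseries) (m : nat) k : lsN X + m%:Z < k ->
  lsc X (k - m%:Z) = 0.
Proof. by move=> h; rewrite lsP // ltrBrDr. Qed.
Definition ls_shift (X : lseries) (m : nat) : lseries :=
  @LSeries (lsN X + m%:Z) _ (@ls_shift_P X m).

Lemma ls_pige_P (X : lseries) k : lsN X < k ->
  (if (0 : int) <= k then lsc X k else 0) = 0.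
Proof. by move=> h; rewrite lsP //; case: ifP. Qed.
Definition ls_pige (X : lseries) : lseries := @LSeries (lsN X) _ (@ls_pige_P X).

Lemma ls_pigt_P (X : lseries) k : lsN X < k ->
  (if (0 : int) < k then lsc X k else 0) = 0.
Proof. by move=> h; rewrite lsP //; case: ifP. Qed.
Definition ls_pigt (X : lseries) : lseries := @LSeries (lsN X) _ (@ls_pigt_P X).

(* product: (XY)_k = sum_{i+j=k} X_i Y_j ; with i = N_X - t, t >= 0 *)
Definition ls_mulc (X Y : lseries) (k : int) : 'M[R]_n :=
  \sum_(t < absz (lsN X + lsN Y - k + 1))
     lsc X (lsN X - t%:Z) *m lsc Y (k - lsN X + t%:Z).

Lemma ls_mul_P (X Y : lseries) k : lsN X + lsN Y < k -> ls_mulc X Y k = 0.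
Proof.
move=> h; rewrite /ls_mulc big1 // => t _.
rewrite [lsc Y _]lsP ?mulmx0 //.
have h1 : lsN Y < k - lsN X by rewrite ltrBrDl.
by apply: (lt_le_trans h1); rewrite lerDl.
Qed.
Definition ls_mul (X Y : lseries) : lseries :=
  @LSeries (lsN X + lsN Y) _ (@ls_mul_P X Y).

Definition ls_br (X Y : lseries) : lseries := ls_sub (ls_mul X Y) (ls_mul Y X).

End LSeries.

Section LMap.
Variables (R : comNzRingType) (n : nat).
Lemma ls_map_P (f : {additive R -> R}) (X : lseries R n) k : lsN X < k ->
  map_mx f (lsc X k) = 0.
Proof. by move=> h; rewrite lsP //; apply/matrixP => i j; rewrite !mxE raddf0. Qed.
Definition ls_map (f : {additive R -> R}) (X : lseries R n) : lseries R n :=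
  @LSeries R n (lsN X) _ (@ls_map_P f X).
End LMap.

Definition in_Gneg (R : comNzRingType) n (g : lseries R n) :=
  lsc g 0 = 1%:M /\ forall k : int, 0 < k -> lsc g k = 0.

Definition in_Gle0 (R : comNzRingType) n (K : lseries R n) :=
  (exists M : 'M[R]_n, M *m lsc K 0 = 1%:M /\ lsc K 0 *m M = 1%:M) /\
  forall k : int, 0 < k -> lsc K k = 0.

Definition ls_inverse (R : comNzRingType) n (g ginv : lseries R n) :=
  ls_eq (ls_mul g ginv) (ls_cst 1%:M) /\ ls_eq (ls_mul ginv g) (ls_cst 1%:M).

Definition is_derivation (R : comNzRingType) (d : R -> R) :=
  forall x y, d (x * y) = d x * y + x * d y.

Definition emb (C : fieldType) (R : comAlgType C) n (M : 'M[C]_n) : 'M[R]_n :=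
  map_mx (in_alg R) M.

(* E_1..E_r is a basis of a commutative subalgebra t of sl_n(C) of maximal
   dimension r among commutative subalgebras of sl_n(C). *)
Definition comm_mxs (C : fieldType) n s (W : 'M[C]_(s, n * n)) :=
  (forall i, \tr (vec_mx (row i W)) = 0) /\
  (forall i j, vec_mx (row i W) *m vec_mx (row j W)
               = vec_mx (row j W) *m vec_mx (row i W)).

Definition cartan_basis (C : fieldType) n r (E : 'I_r -> 'M[C]_n) :=
  let W := \matrix_(a < r) mxvec (E a) in
  comm_mxs W /\ row_free W /\
  (forall s (W' : 'M[C]_(s, n * n)), comm_mxs W' -> (\rank W' <= r)%N).

Definition A_op (R : comNzRingType) n (U : lseries R n) (m : nat) :=
  ls_sub (ls_pige (ls_shift U m)) (ls_shift U m).
Definition D_op (R : comNzRingType) n (V : lseries R n) (m : nat) :=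
  ls_sub (ls_pigt (ls_shift V m.-1)) (ls_shift V m.-1).

(* All U_a (resp. V_b) are conjugates, by one and the same series, of
   pairwise commuting constants, so the series Q_i := U_{a_i} z^{m_i} commute.
   Put P_i := pi(Q_i), so that A_i = P_i - Q_i and, by the hierarchy, the
   derivative of A_2 in direction (m_1, a_1) is the part of -[P_1, Q_2] in
   degrees < s, where s = 0 for pi_{>=0} and s = 1 for pi_{>0}.  Comparing
   coefficients of degree k: if k >= s, every term vanishes because the A_i
   live in degrees < s and 2s - 2 < s; if k < s, then [P_1, P_2] (living in
   degrees >= 2s) vanishes, and expanding [P_1 - Q_1, P_2 - Q_2] with
   [Q_1, Q_2] = 0 leaves exactly the two derivative terms.  Neither the
   Leibniz rule for the derivations nor the shape of g (resp. K) is needed. *)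
From HB Require Import structures.
From mathcomp Require Import all_boot all_order all_algebra zify.
Import Order.TTheory GRing.Theory Num.Theory.
Set Implicit Arguments. Unset Strict Implicit. Unset Printing Implicit Defensive.
Local Open Scope ring_scope.

Section WindowSum.
Variable V : zmodType.

Definition window_sum (f : int -> V) (h : int) (l : nat) := \sum_(t < l) f (h - t%:Z).

Lemma window_sum_top f hi h l : (forall i, hi < i -> f i = 0) -> hi < h ->
  window_sum f h l.+1 = window_sum f (h - 1) l.
Proof.
move=> f_hi hih; rewrite /window_sum big_ord_recl /= subr0 f_hi // add0r.
by apply: eq_bigr => t _; congr f; rewrite /bump /=; lia.
Qed.

Lemma window_sum_bot f lo h l : (forall i, i < lo -> f i = 0) -> h - l%:Z < lo ->
  window_sum f h l.+1 = window_sum f h l.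
Proof. by move=> f_lo hl; rewrite /window_sum big_ord_recr /= f_lo // addr0. Qed.

Section Support.
Variables (f : int -> V) (lo hi : int).
Hypotheses (f_hi : forall i, hi < i -> f i = 0) (f_lo : forall i, i < lo -> f i = 0).

Lemma window_sum_canon h l : hi <= h -> h - l%:Z < lo ->
  window_sum f h l = window_sum f hi (absz (hi - lo + 1)).
Proof.
move=> hih hl; have [hilo | lohi] := ltP hi lo.
  have f0 i : f i = 0 by have [/f_hi | ?] := ltP hi i; last (apply: f_lo; lia).
  by rewrite /window_sum !big1 // => t _; rewrite f0.
set c := absz (hi - lo + 1).
have extend e : window_sum f hi (c + e) = window_sum f hi c.
  by elim: e => [|e IH]; rewrite ?addn0 // addnS (window_sum_bot f_lo) //; lia.
have shrink d h' l' : h' = hi + d%:Z -> h' - l'%:Z < lo ->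
    window_sum f h' l' = window_sum f hi c.
  elim: d h' l' => [|d IH] h' [|l'] eh hl'; try lia.
  - have -> : l'.+1 = (c + (l'.+1 - c))%N by lia.
    by rewrite eh addr0 extend.
  - by rewrite (window_sum_top _ f_hi); [apply: IH; lia | lia].
by apply: (shrink (absz (h - hi))); lia.
Qed.

Lemma eq_window_sum h1 l1 h2 l2 : hi <= h1 -> h1 - l1%:Z < lo ->
  hi <= h2 -> h2 - l2%:Z < lo -> window_sum f h1 l1 = window_sum f h2 l2.
Proof. by move=> *; rewrite (@window_sum_canon h1 l1) // (@window_sum_canon h2 l2). Qed.

End Support.
End WindowSum.

(* The shape of the degree-[k < s] coefficient once [P1 P2] and [P2 P1] have
   dropped out; [q] stands for both [Q2 Q1] and [Q1 Q2]. *)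
Lemma curvature_defect_cancel (V : zmodType) (x y z w q : V) :
  - (x - y) - - (z - w) - ((0 - x - (w - q)) - (0 - z - (y - q))) = 0.
Proof.
rewrite !sub0r !opprB opprD opprK opprB !addrA (addrAC _ (- w) (- z)) addrK.
rewrite (addrAC _ (- y) x) (addrAC _ q x) (addrAC _ (- w) x) subrK.
by rewrite (addrAC _ (- y) w) (addrAC _ q w) subrK (addrAC y q (- y)) subrr add0r subrr.
Qed.

Section LSeriesAlgebra.
Variables (R : comNzRingType) (n : nat).
Local Notation ls := (lseries R n).
Local Notation c := (@lsc R n).

Definition ls_supp_le (X : ls) (b : int) := forall i, b < i -> c X i = 0.
Definition ls_supp_ge (X : ls) (b : int) := forall i, i < b -> c X i = 0.

Lemma ls_supp_leN X : ls_supp_le X (lsN X). Proof. exact: lsP. Qed.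
#[local] Hint Resolve ls_supp_leN : core.

Lemma ls_supp_le_max (X X' : ls) :
  ls_supp_le X (Order.max (lsN X) (lsN X')) /\ ls_supp_le X' (Order.max (lsN X) (lsN X')).
Proof. by split=> i; rewrite gt_max => /andP[? ?]; apply: lsP. Qed.

(* Any window of summation covering the supports computes the product. *)
Lemma ls_mulcE (X Y : ls) k bX bY h l : ls_supp_le X bX -> ls_supp_le Y bY ->
  bX <= h -> h - l%:Z < k - bY ->
  c (ls_mul X Y) k = \sum_(t < l) c X (h - t%:Z) *m c Y (k - h + t%:Z).
Proof.
move=> hX hY hh hl; pose f i := c X i *m c Y (k - i).
have -> : \sum_(t < l) c X (h - t%:Z) *m c Y (k - h + t%:Z) = window_sum f h l.
  by apply: eq_bigr => t _; rewrite /f; congr (_ *m c Y _); lia.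
have -> : c (ls_mul X Y) k = window_sum f (lsN X) (absz (lsN X + lsN Y - k + 1)).
  by apply: eq_bigr => t _; rewrite /f; congr (_ *m c Y _); lia.
apply: (@eq_window_sum _ f (Order.max (k - bY) (k - lsN Y)) (Order.min bX (lsN X))).
- move=> i; rewrite gt_min /f => /orP[/hX | /ls_supp_leN] ->; exact: mul0mx.
- move=> i; rewrite lt_max /f => /orP[] hi.
  + by rewrite hY ?mulmx0 //; lia.
  + by rewrite (@ls_supp_leN Y) ?mulmx0 //; lia.
all: rewrite ?ge_min ?lt_max; apply/orP; lia.
Qed.

Definition window_len (a : int) := (absz a).+1.

Lemma window_lenP a : a < (window_len a)%:Z.
Proof. by apply: le_lt_trans (lez_abs a) _; rewrite ltz_nat ltnSn. Qed.

Lemma ls_mulcE_supp (X Y : ls) k bX bY : ls_supp_le X bX -> ls_supp_le Y bY ->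
  c (ls_mul X Y) k
  = \sum_(t < window_len (bX + bY - k)) c X (bX - t%:Z) *m c Y (k - bX + t%:Z).
Proof.
move=> hX hY; apply: (@ls_mulcE X Y k bX bY) => //.
by have := window_lenP (bX + bY - k); lia.
Qed.

Lemma ls_mul_supp_le (X Y : ls) k bX bY : ls_supp_le X bX -> ls_supp_le Y bY ->
  bX + bY < k -> c (ls_mul X Y) k = 0.
Proof. by move=> hX hY hk; rewrite (@ls_mulcE X Y k bX bY bX 0) ?big_ord0 //; lia. Qed.

Lemma ls_mul_supp_ge (X Y : ls) k bX bY : ls_supp_ge X bX -> ls_supp_ge Y bY ->
  k < bX + bY -> c (ls_mul X Y) k = 0.
Proof.
move=> hX hY hk; rewrite (@ls_mulcE_supp X Y k (lsN X) (lsN Y)) //.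
apply: big1 => t _; have [/hX -> | h] := ltP (lsN X - t%:Z) bX; first exact: mul0mx.
by rewrite hY ?mulmx0 //; lia.
Qed.

Lemma ls_mulBl (X Y Z : ls) k :
  c (ls_mul (ls_sub X Y) Z) k = c (ls_mul X Z) k - c (ls_mul Y Z) k.
Proof.
have [hX hY] := ls_supp_le_max X Y.
rewrite !(@ls_mulcE_supp _ _ k (lsN (ls_sub X Y)) (lsN Z)) // -sumrB.
by apply: eq_bigr => t _; rewrite mulmxBl.
Qed.

Lemma ls_mulBr (X Y Z : ls) k :
  c (ls_mul Z (ls_sub X Y)) k = c (ls_mul Z X) k - c (ls_mul Z Y) k.
Proof.
have [hX hY] := ls_supp_le_max X Y.
rewrite !(@ls_mulcE_supp _ _ k (lsN Z) (lsN (ls_sub X Y))) // -sumrB.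
by apply: eq_bigr => t _; rewrite mulmxBr.
Qed.

Lemma eq_ls_mull (X X' Y : ls) : ls_eq X X' -> ls_eq (ls_mul X Y) (ls_mul X' Y).
Proof.
move=> eX k; have [hX hX'] := ls_supp_le_max X X'.
rewrite !(@ls_mulcE_supp _ _ k (Order.max (lsN X) (lsN X')) (lsN Y)) //.
by apply: eq_bigr => t _; rewrite eX.
Qed.

Lemma eq_ls_mulr (X X' Y : ls) : ls_eq X X' -> ls_eq (ls_mul Y X) (ls_mul Y X').
Proof.
move=> eX k; have [hX hX'] := ls_supp_le_max X X'.
rewrite !(@ls_mulcE_supp _ _ k (lsN Y) (Order.max (lsN X) (lsN X'))) //.
by apply: eq_bigr => t _; rewrite eX.
Qed.

Lemma ls_mul_shiftl (X Y : ls) m k :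
  c (ls_mul (ls_shift X m) Y) k = c (ls_mul X Y) (k - m%:Z).
Proof.
rewrite (@ls_mulcE_supp _ Y k (lsN X + m%:Z) (lsN Y)) //.
rewrite (@ls_mulcE_supp X Y _ (lsN X) (lsN Y)) //.
have -> : lsN X + m%:Z + lsN Y - k = lsN X + lsN Y - (k - m%:Z) by lia.
by apply: eq_bigr => t _ /=; congr (c X _ *m c Y _); lia.
Qed.

Lemma ls_mul_shiftr (X Y : ls) m k :
  c (ls_mul X (ls_shift Y m)) k = c (ls_mul X Y) (k - m%:Z).
Proof.
rewrite (@ls_mulcE_supp X _ k (lsN X) (lsN Y + m%:Z)) //.
rewrite (@ls_mulcE_supp X Y _ (lsN X) (lsN Y)) //.
have -> : lsN X + (lsN Y + m%:Z) - k = lsN X + lsN Y - (k - m%:Z) by lia.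
by apply: eq_bigr => t _ /=; congr (c X _ *m c Y _); lia.
Qed.

Lemma ls_supp_le_cst M : ls_supp_le (ls_cst M) 0.
Proof. by move=> i hi /=; rewrite gt_eqF. Qed.

Lemma ls_mul_cstl (Y : ls) M k : c (ls_mul (ls_cst M) Y) k = M *m c Y k.
Proof.
rewrite (@ls_mulcE_supp _ Y k 0 (lsN Y)) ?ls_supp_le_cst //.
by rewrite big_ord_recl /= subr0 !addr0 big1 ?addr0 // => t _; rewrite mul0mx.
Qed.

Lemma ls_mul_cstr (X : ls) M k : c (ls_mul X (ls_cst M)) k = c X k *m M.
Proof.
set B := Order.max (lsN X) k.
have hX : ls_supp_le X B by move=> i; rewrite gt_max => /andP[? _]; apply: lsP.
rewrite (@ls_mulcE X _ k B 0 B (absz (B - k)).+1) ?ls_supp_le_cst //; last lia.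
rewrite big_ord_recr /= big1 ?add0r; last first.
  by move=> t _; rewrite ifF ?mulmx0 //; apply/negbTE; have := ltn_ord t; lia.
have -> : B - (absz (B - k))%:Z = k by lia.
by have -> : k - B + (absz (B - k))%:Z = 0 by lia.
Qed.

Lemma ls_mulA (X Y Z : ls) : ls_eq (ls_mul (ls_mul X Y) Z) (ls_mul X (ls_mul Y Z)).
Proof.
move=> k; set L := window_len (lsN X + lsN Y + lsN Z - k).
have hL := window_lenP (lsN X + lsN Y + lsN Z - k).
rewrite (@ls_mulcE _ Z k (lsN X + lsN Y) (lsN Z) (lsN X + lsN Y) L) //; last lia.
rewrite (@ls_mulcE X _ k (lsN X) (lsN Y + lsN Z) (lsN X) L) //; last lia.
under eq_bigr => t _.
  rewrite (@ls_mulcE X Y _ (lsN X) (lsN Y) (lsN X) L) //; last by have := ltn_ord t; lia.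
  rewrite mulmx_suml; over.
rewrite exchange_big; apply: eq_bigr => s _.
rewrite (@ls_mulcE Y Z _ (lsN Y) (lsN Z) (lsN Y + s%:Z) L) //; [|lia|lia].
rewrite mulmx_sumr; apply: eq_bigr => t _; rewrite mulmxA.
by congr (_ *m c Y _ *m c Z _); lia.
Qed.

Lemma ls_eq_trans (X Y Z : ls) : ls_eq X Y -> ls_eq Y Z -> ls_eq X Z.
Proof. by move=> eXY eYZ k; rewrite eXY. Qed.

Lemma ls_eq_sym (X Y : ls) : ls_eq X Y -> ls_eq Y X.
Proof. by move=> eXY k; rewrite eXY. Qed.

Lemma ls_cst_comm (A B : 'M[R]_n) : A *m B = B *m A ->
  ls_eq (ls_mul (ls_cst A) (ls_cst B)) (ls_mul (ls_cst B) (ls_cst A)).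
Proof. by move=> AB k; rewrite !ls_mul_cstr /=; case: (k == 0); rewrite ?mul0mx. Qed.

Lemma ls_shift_comm (X Y : ls) m1 m2 : ls_eq (ls_mul X Y) (ls_mul Y X) ->
  ls_eq (ls_mul (ls_shift X m1) (ls_shift Y m2)) (ls_mul (ls_shift Y m2) (ls_shift X m1)).
Proof.
move=> XY k; rewrite !ls_mul_shiftl !ls_mul_shiftr XY.
by congr (c (ls_mul Y X) _); lia.
Qed.

Section Conjugation.
Variables g gi : ls.
Hypothesis gi_g : ls_eq (ls_mul gi g) (ls_cst 1%:M).

Lemma ls_mul_conj S1 S2 :
  ls_eq (ls_mul (ls_mul (ls_mul g S1) gi) (ls_mul (ls_mul g S2) gi))
        (ls_mul g (ls_mul (ls_mul S1 S2) gi)).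
Proof.
have cancel_g : ls_eq (ls_mul gi (ls_mul (ls_mul g S2) gi)) (ls_mul S2 gi).
  apply: ls_eq_trans (ls_eq_sym (ls_mulA _ _ _)) _; apply: eq_ls_mull.
  apply: ls_eq_trans (ls_eq_sym (ls_mulA _ _ _)) _.
  apply: ls_eq_trans (eq_ls_mull _ gi_g) _.
  by move=> k; rewrite ls_mul_cstl mul1mx.
apply: ls_eq_trans (ls_mulA _ _ _) _; apply: ls_eq_trans (eq_ls_mulr _ cancel_g) _.
apply: ls_eq_trans (ls_mulA _ _ _) _.
exact/eq_ls_mulr/ls_eq_sym/ls_mulA.
Qed.

Lemma ls_conj_comm S1 S2 U1 U2 : ls_eq (ls_mul S1 S2) (ls_mul S2 S1) ->
  ls_eq U1 (ls_mul (ls_mul g S1) gi) -> ls_eq U2 (ls_mul (ls_mul g S2) gi) ->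
  ls_eq (ls_mul U1 U2) (ls_mul U2 U1).
Proof.
move=> S12 eU1 eU2.
have conj_U S S' U U' : ls_eq U (ls_mul (ls_mul g S) gi) ->
    ls_eq U' (ls_mul (ls_mul g S') gi) ->
    ls_eq (ls_mul U U') (ls_mul g (ls_mul (ls_mul S S') gi)).
  move=> eU eU'; apply: ls_eq_trans (eq_ls_mull _ eU) _.
  exact: ls_eq_trans (eq_ls_mulr _ eU') (ls_mul_conj _ _).
apply: ls_eq_trans (conj_U _ _ _ _ eU1 eU2) _; apply: ls_eq_sym.
exact: ls_eq_trans (conj_U _ _ _ _ eU2 eU1) (eq_ls_mulr _ (eq_ls_mull _ (ls_eq_sym S12))).
Qed.

End Conjugation.

Definition ls_truncation (p : pred int) (P Q : ls) :=
  forall k, c P k = if p k then c Q k else 0.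

Lemma ls_subE (X Y : ls) k : c (ls_sub X Y) k = c X k - c Y k. Proof. by []. Qed.

Lemma ls_brE (X Y : ls) k : c (ls_br X Y) k = c (ls_mul X Y) k - c (ls_mul Y X) k.
Proof. by []. Qed.

Lemma ls_map_truncation_defect (f : {additive R -> R}) p (P Y Z : ls) m :
  ls_truncation p Z (ls_shift Y m) -> ls_eq (ls_map f Y) (ls_br P Y) ->
  forall k, c (ls_map f (ls_sub Z (ls_shift Y m))) k
            = if p k then 0 else - c (ls_br P (ls_shift Y m)) k.
Proof.
move=> hZ fY k; rewrite -[LHS]/(map_mx f (c Z k - c Y (k - m%:Z))) hZ.
case: ifP => _; first by rewrite subrr map_mx0.
rewrite sub0r map_mxN -[map_mx f _]/(c (ls_map f Y) (k - m%:Z)).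
by rewrite fY !ls_brE ls_mul_shiftr ls_mul_shiftl.
Qed.

Lemma zero_curvature_truncations p s (Q1 Q2 P1 P2 T1 T2 : ls) :
  0 <= s -> s <= 1 -> (forall k, p k = (s <= k)) ->
  ls_truncation p P1 Q1 -> ls_truncation p P2 Q2 ->
  ls_eq (ls_mul Q1 Q2) (ls_mul Q2 Q1) ->
  (forall k, c T1 k = if p k then 0 else - c (ls_br P1 Q2) k) ->
  (forall k, c T2 k = if p k then 0 else - c (ls_br P2 Q1) k) ->
  ls_eq (ls_sub (ls_sub T1 T2) (ls_br (ls_sub P1 Q1) (ls_sub P2 Q2))) (ls0 R n).
Proof.
move=> s0 s1 ps hP1 hP2 Q12 hT1 hT2 k.
rewrite [RHS]/= !ls_subE hT1 hT2; case pk: (p k).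
  have defect_low P Q : ls_truncation p P Q -> ls_supp_le (ls_sub P Q) (s - 1).
    by move=> hP i hi; rewrite ls_subE hP ps ifT ?subrr //; lia.
  have sk : s <= k by rewrite -ps.
  rewrite !(@ls_mul_supp_le _ _ k (s - 1) (s - 1)) ?subrr //; try lia;
    exact: defect_low.
have ks : k < s by rewrite ltNge -ps pk.
have trunc_high P Q : ls_truncation p P Q -> ls_supp_ge P s.
  by move=> hP i hi; rewrite hP ps ifF //; apply/negbTE; rewrite -ltNge.
rewrite !ls_brE !ls_mulBl !ls_mulBr Q12.
rewrite (@ls_mul_supp_ge P1 P2 k s s) ?(@ls_mul_supp_ge P2 P1 k s s);
  try lia; try exact: trunc_high.
exact: curvature_defect_cancel.
Qed.

Lemma truncation_zero_curvature p s (f1 f2 : {additive R -> R}) (Y1 Y2 : ls) m1 m2 :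
  0 <= s -> s <= 1 -> (forall k, p k = (s <= k)) ->
  forall P1 P2, ls_truncation p P1 (ls_shift Y1 m1) -> ls_truncation p P2 (ls_shift Y2 m2) ->
  ls_eq (ls_mul Y1 Y2) (ls_mul Y2 Y1) ->
  ls_eq (ls_map f1 Y2) (ls_br P1 Y2) -> ls_eq (ls_map f2 Y1) (ls_br P2 Y1) ->
  ls_eq (ls_sub (ls_sub (ls_map f1 (ls_sub P2 (ls_shift Y2 m2)))
                        (ls_map f2 (ls_sub P1 (ls_shift Y1 m1))))
                (ls_br (ls_sub P1 (ls_shift Y1 m1)) (ls_sub P2 (ls_shift Y2 m2))))
        (ls0 R n).
Proof.
move=> s0 s1 ps P1 P2 hP1 hP2 Y12 f1Y2 f2Y1.
apply: (zero_curvature_truncations s0 s1 ps hP1 hP2); first exact: ls_shift_comm.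
- move=> k; rewrite (ls_map_truncation_defect hP2 f1Y2) !ls_brE.
  by rewrite !ls_mul_shiftr !ls_mul_shiftl.
- move=> k; rewrite (ls_map_truncation_defect hP1 f2Y1) !ls_brE.
  by rewrite !ls_mul_shiftr !ls_mul_shiftl.
Qed.

End LSeriesAlgebra.

Lemma cartan_basis_comm (C : fieldType) (R : comAlgType C) n r (E : 'I_r -> 'M[C]_n) :
  cartan_basis E -> forall a b, emb R (E a) *m emb R (E b) = emb R (E b) *m emb R (E a).
Proof.
move=> [[_ Ecomm] _] a b; rewrite /emb -!map_mxM; congr map_mx.
by have := Ecomm a b; rewrite !rowK !mxvecK.
Qed.

Theorem corollary2p1
  (C : numClosedFieldType) (n r : nat) (E : 'I_r -> 'M[C]_n)
  (hE : cartan_basis E) (R : comAlgType C) :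
  (* (a) *)
  (forall (d : nat -> 'I_r -> {linear R -> R}),
     (forall m a, is_derivation (d m a)) ->
     (forall m1 a1 m2 a2 x, d m1 a1 (d m2 a2 x) = d m2 a2 (d m1 a1 x)) ->
   forall (U : 'I_r -> lseries R n),
     (exists g ginv : lseries R n, in_Gneg g /\ ls_inverse g ginv /\
        forall a, ls_eq (U a) (ls_mul (ls_mul g (ls_cst (emb R (E a)))) ginv)) ->
     (forall (m : nat) a1 a2,
        ls_eq (ls_map (d m a1) (U a2)) (ls_br (ls_pige (ls_shift (U a1) m)) (U a2))) ->
   forall (m1 m2 : nat) (a1 a2 : 'I_r),
     ls_eq (ls_sub (ls_sub (ls_map (d m1 a1) (A_op (U a2) m2))
                           (ls_map (d m2 a2) (A_op (U a1) m1)))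
                   (ls_br (A_op (U a1) m1) (A_op (U a2) m2)))
           (ls0 R n)) /\
  (* (b) *)
  (forall (d : nat -> 'I_r -> {linear R -> R}),
     (forall (m : nat) b, (1 <= m)%N -> is_derivation (d m b)) ->
     (forall (m1 m2 : nat) b1 b2 x, (1 <= m1)%N -> (1 <= m2)%N ->
        d m1 b1 (d m2 b2 x) = d m2 b2 (d m1 b1 x)) ->
   forall (V : 'I_r -> lseries R n),
     (exists K Kinv : lseries R n, in_Gle0 K /\ ls_inverse K Kinv /\
        forall b, ls_eq (V b)
          (ls_mul (ls_mul K (ls_shift (ls_cst (emb R (E b))) 1)) Kinv)) ->
     (forall (m : nat) b1 b2, (1 <= m)%N ->
        ls_eq (ls_map (d m b1) (V b2))
              (ls_br (ls_pigt (ls_shift (V b1) m.-1)) (V b2))) ->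
   forall (m1 m2 : nat) (b1 b2 : 'I_r), (1 <= m1)%N -> (1 <= m2)%N ->
     ls_eq (ls_sub (ls_sub (ls_map (d m1 b1) (D_op (V b2) m2))
                           (ls_map (d m2 b2) (D_op (V b1) m1)))
                   (ls_br (D_op (V b1) m1) (D_op (V b2) m2)))
           (ls0 R n)).
Proof.
split.
- move=> d _ _ U [g [gi [_ [[_ gi_g] conjU]]]] hierarchy m1 m2 a1 a2.
  apply: (@truncation_zero_curvature _ _ (fun k => 0 <= k) 0) => //.
  have E12 := ls_cst_comm (cartan_basis_comm R hE a1 a2).
  exact: (ls_conj_comm gi_g E12 (conjU a1) (conjU a2)).
- move=> d _ _ V [K [Ki [_ [[_ Ki_K] conjV]]]] hierarchy m1 m2 b1 b2 m1_gt0 m2_gt0.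
  apply: (@truncation_zero_curvature _ _ (fun k => 0 < k) 1) => //; try exact: hierarchy.
  have E12 := ls_shift_comm 1 1 (ls_cst_comm (cartan_basis_comm R hE b1 b2)).
  exact: (ls_conj_comm Ki_K E12 (conjV b1) (conjV b2)).
Qed.
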